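(* Let $X$ and $Y$ be disjoint (finite or infinite) sets of cardinality at least two, let $M\le\mathrm{Sym}(X)$ and $N\le\mathrm{Sym}(Y)$ be permutation groups, let $T$ be the $(|X|,|Y|)$-biregular tree, and let $c$ be a legal colouring of $X$ and $Y$. Then $U_c(M,N)$ satisfies Tits' independence property (P).
   Context: $T$ has natural bipartition $VT=V_X\sqcup V_Y$ (vertices in $V_X$ have valency $|X|$, in $V_Y$ valency $|Y|$). $A(v)$, $\overline{A}(v)$ are the sets of arcs (ordered pairs of adjacent vertices) with origin, resp. terminus, $v$. A legal colouring is a map $c:AT\to X\cup Y$ restricting to a bijection $A(v)\to X$ for $v\in V_X$, to a bijection $A(v)\to Y$ for $v\in V_Y$, and constant on each $\overline{A}(v)$. $U_c(M,N)$ is the group of $g\in\mathrm{Aut}(T)$ with $gV_X=V_X$ and $c|_{A(gv)}\circ g|_{A(v)}\circ(c|_{A(v)})^{-1}$ in $M$ for $v\in V_X$ and in $N$ for $v\in V_Y$. Property (P): let $G$ act on a tree $T$. For a non-empty (finite or infinite) path $\mathcal{P}$ in $T$, let $\pi_{\mathcal{P}}(v)$ be the unique vertex of $\mathcal{P}$ closest to $v$; for $q\in V\mathcal{P}$, $\pi_{\mathcal{P}}^{-1}(q)$ spans a subtree invariant under the pointwise stabiliser $G_{(\mathcal{P})}$, and $G^q_{(\mathcal{P})}$ denotes the permutation group induced by $G_{(\mathcal{P})}$ on $\pi^{-1}_{\mathcal{P}}(q)$. $G$ has property (P) if, for every such path $\mathcal{P}$, the natural homomorphism $G_{(\mathcal{P})}\to\prod_{q\in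 V\mathcal{P}} G^q_{(\mathcal{P})}$ is an isomorphism. *)

From Stdlib Require Import ZArith List.
Open Scope Z_scope.

Section Defs.
Context {V : Type} (adj : V -> V -> Prop).

(* walks: u = x_0, x_1, ..., x_n = v with consecutive vertices adjacent;
   the list holds x_1 ... x_n *)
Fixpoint is_walk (u : V) (l : list V) (v : V) : Prop :=
  match l with
  | nil => u = v
  | x :: l' => adj u x /\ is_walk x l' v
  end.

Fixpoint reduced (u : V) (l : list V) : Prop :=
  match l with
  | x :: ((y :: _) as l') => u <> y /\ reduced x l'
  | _ => True
  end.

(* a tree (Serre): simple graph in which any two vertices are joined by a
   unique reduced walk (i.e. connected and without cycles) *)
Definition is_tree : Prop :=
  (forall u v, adj u v -> adj v u) /\
  (forall u, ~ adj u u) /\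
  (forall u v, exists l, is_walk u l v /\ reduced u l /\
     forall l', is_walk u l' v -> reduced u l' -> l' = l).

Definition dist (u v : V) (n : nat) : Prop :=
  exists l, is_walk u l v /\ length l = n /\
    forall l', is_walk u l' v -> (n <= length l')%nat.

Definition is_aut (g : V -> V) : Prop :=
  (forall u v, g u = g v -> u = v) /\ (forall v, exists u, g u = v) /\
  (forall u v, adj u v <-> adj (g u) (g v)).

(* a non-empty (finite, one-way infinite or bi-infinite) path, given as an
   injective map p from a non-empty interval I of Z with consecutive vertices
   adjacent *)
Definition is_path (I : Z -> Prop) (p : Z -> V) : Prop :=
  (exists i, I i) /\
  (forall a b c, I a -> I c -> a <= b <= c -> I b) /\
  (forall i j, I i -> I j -> p i = p j -> i = j) /\
  (forall i, I i -> I (i + 1) -> adj (p i) (p (i + 1))).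

Definition in_path (I : Z -> Prop) (p : Z -> V) (v : V) : Prop :=
  exists i, I i /\ p i = v.

(* proj I p v q : q = pi_P(v), the unique vertex of P closest to v *)
Definition proj (I : Z -> Prop) (p : Z -> V) (v q : V) : Prop :=
  in_path I p q /\
  forall q', in_path I p q' -> q' <> q ->
    exists n m, dist v q n /\ dist v q' m /\ (n < m)%nat.

Definition fix_path (G : (V -> V) -> Prop) (I : Z -> Prop) (p : Z -> V)
  (g : V -> V) : Prop :=
  G g /\ forall q, in_path I p q -> g q = q.

(* Tits' property (P) for a group G <= Aut(T) (given as a set of
   automorphisms): the natural homomorphism
   G_(P) -> prod_{q in VP} G^q_(P), g |-> (g restricted to pi^{-1}(q))_q,
   is bijective, for every non-empty path P.  An element of the product is a
   family (h q)_q where h q is a map on pi^{-1}(q) that is the restriction of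
   some element of G_(P). *)
Definition propertyP (G : (V -> V) -> Prop) : Prop :=
  forall (I : Z -> Prop) (p : Z -> V), is_path I p ->
  (forall g g', fix_path G I p g -> fix_path G I p g' ->
     (forall q v, in_path I p q -> proj I p v q -> g v = g' v) ->
     forall v, g v = g' v) /\
  (forall h : V -> V -> V,
     (forall q, in_path I p q -> exists g, fix_path G I p g /\
        forall v, proj I p v q -> h q v = g v) ->
     exists g, fix_path G I p g /\
       forall q v, in_path I p q -> proj I p v q -> g v = h q v).

Section Colouring.
Context {X Y : Type} (VX : V -> Prop).

(* natural bipartition V = V_X |_| V_Y, with V_Y the complement of V_X *)
Definition is_bipartition : Prop :=
  forall u v, adj u v -> (VX u <-> ~ VX v).

Definition is_biregular : Prop :=
  (forall v, VX v -> exists f : X -> V,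
     (forall x x', f x = f x' -> x = x') /\ (forall x, adj v (f x)) /\
     (forall w, adj v w -> exists x, f x = w)) /\
  (forall v, ~ VX v -> exists f : Y -> V,
     (forall y y', f y = f y' -> y = y') /\ (forall y, adj v (f y)) /\
     (forall w, adj v w -> exists y, f y = w)).

(* legal colouring c : AT -> X u Y (the disjoint union is X + Y); c u v is
   the colour of the arc (u,v) and is only relevant when adj u v *)
Definition legal_colouring (c : V -> V -> X + Y) : Prop :=
  (forall v, VX v ->
     (forall w, adj v w -> exists x, c v w = inl x) /\
     (forall w w', adj v w -> adj v w' -> c v w = c v w' -> w = w') /\
     (forall x, exists w, adj v w /\ c v w = inl x)) /\
  (forall v, ~ VX v ->
     (forall w, adj v w -> exists y, c v w = inr y) /\
     (forall w w', adj v w -> adj v w' -> c v w = c v w' -> w = w') /\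
     (forall y, exists w, adj v w /\ c v w = inr y)) /\
  (forall v w w', adj w v -> adj w' v -> c w v = c w' v).

(* U_c(M,N): g in Aut(T), g V_X = V_X, and the local action
   c|_{A(gv)} o g|_{A(v)} o (c|_{A(v)})^{-1} lies in M (resp. N) *)
Definition U_c (c : V -> V -> X + Y) (M : (X -> X) -> Prop)
  (N : (Y -> Y) -> Prop) (g : V -> V) : Prop :=
  is_aut g /\
  (forall v, VX v -> VX (g v)) /\ (forall v, VX v -> exists u, VX u /\ g u = v) /\
  (forall v, VX v -> exists m, M m /\
     forall w x, adj v w -> c v w = inl x -> c (g v) (g w) = inl (m x)) /\
  (forall v, ~ VX v -> exists n, N n /\
     forall w y, adj v w -> c v w = inr y -> c (g v) (g w) = inr (n y)).

End Colouring.
End Defs.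

Definition is_perm_group {S : Type} (M : (S -> S) -> Prop) : Prop :=
  (forall m, M m -> (forall a b, m a = m b -> a = b) /\ (forall b, exists a, m a = b)) /\
  M (fun a => a) /\
  (forall m m', M m -> M m' -> M (fun a => m (m' a))) /\
  (forall m, M m -> exists m', M m' /\ (forall a, m' (m a) = a) /\ (forall a, m (m' a) = a)).

From Stdlib Require Import ZArith List Lia Classical ClassicalEpsilon.
Import ListNotations.

(* Membership in U_c(M,N) is a local condition: an automorphism belongs to it
   as soon as, around every vertex v, it agrees on v and its neighbours with
   some element of U_c(M,N).  Given elements g_q of the pointwise stabiliser
   of a path P, one for each q in P, glue them to g v := g_{pi(v)} v.  Two
   adjacent vertices either have the same projection or both lie on P, where
   every g_q is the identity; so around each v the glued map agrees with
   g_{pi(v)}, hence it is an automorphism lying in U_c(M,N). *)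

Section Walks.
Context {V : Type}.

Fixpoint avoids_but_last (P : V -> Prop) (v : V) (l : list V) : Prop :=
  match l with nil => True | x :: l' => ~ P v /\ avoids_but_last P x l' end.

Fixpoint penultimate (u : V) (l : list V) : option V :=
  match l with
  | nil => None
  | x :: l' => match l' with nil => Some u | _ => penultimate x l' end
  end.

Lemma reduced_tail (x y : V) l : reduced x (y :: l) -> reduced y l.
Proof. destruct l; simpl; tauto. Qed.

Lemma reduced_snoc l : forall (u y : V), reduced u l ->
  (forall a, penultimate u l = Some a -> a <> y) -> reduced u (l ++ [y]).
Proof.
  induction l as [|x [|w l'] IH]; intros u y R Hy; simpl.
  - exact I.
  - split; [apply Hy|]; easy.
  - destruct R as [R1 R2]. split; [exact R1|].
    apply (IH x y R2). intros a Ha. apply Hy. exact Ha.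
Qed.

Lemma avoids_but_last_penultimate (P : V -> Prop) l : forall u a,
  avoids_but_last P u l -> penultimate u l = Some a -> ~ P a.
Proof.
  induction l as [|x [|w l'] IH]; simpl; intros u a Hl Ha.
  - discriminate.
  - injection Ha as <-. tauto.
  - exact (IH x a (proj2 Hl) Ha).
Qed.

Lemma reduced_map (f : V -> V) : (forall u v, f u = f v -> u = v) ->
  forall l u, reduced u l -> reduced (f u) (map f l).
Proof.
  intros Hf. induction l as [|x [|y l'] IH]; intros u R; simpl in *; auto.
  destruct R as [R1 R2]. split; [intro E; apply R1, Hf, E | exact (IH x R2)].
Qed.

Lemma avoids_but_last_map (P : V -> Prop) (f : V -> V) : (forall v, P (f v) -> P v) ->
  forall l u, avoids_but_last P u l -> avoids_but_last P (f u) (map f l).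
Proof.
  intros Hf. induction l as [|x l IH]; intros u Hl; simpl in *; auto.
  destruct Hl as [H1 H2]. split; [intro E; apply H1, Hf, E | exact (IH x H2)].
Qed.

Context (adj : V -> V -> Prop).

Lemma is_walk_map (f : V -> V) : (forall u v, adj u v -> adj (f u) (f v)) ->
  forall l u v, is_walk adj u l v -> is_walk adj (f u) (map f l) (f v).
Proof.
  intros Hf. induction l as [|x l IH]; simpl; intros u v W.
  - now subst.
  - destruct W. split; auto.
Qed.

Lemma is_walk_snoc l : forall u z y,
  is_walk adj u l z -> adj z y -> is_walk adj u (l ++ [y]) y.
Proof.
  induction l as [|x l IH]; simpl; intros u z y W A.
  - now subst.
  - destruct W; split; eauto.
Qed.

Lemma penultimate_snoc l : forall u z y,
  is_walk adj u l z -> penultimate u (l ++ [y]) = Some z.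
Proof.
  induction l as [|x [|w l'] IH]; simpl; intros u z y W.
  - now subst.
  - now destruct W as [_ ->].
  - exact (IH x z y (proj2 W)).
Qed.

Lemma reduced_walk_le l : forall u v, is_walk adj u l v ->
  exists l', is_walk adj u l' v /\ reduced u l' /\ (length l' <= length l)%nat.
Proof.
  induction l as [|x l IH]; intros u v W.
  - exists nil. simpl in *. auto.
  - destruct W as [Hux W]. destruct (IH _ _ W) as [[|y l'] [W' [R' L']]].
    + exists [x]. simpl in *. repeat split; auto. lia.
    + destruct (classic (y = u)) as [->|Hy].
      * exists l'. simpl in *. repeat split; [tauto | eapply reduced_tail; eauto | lia].
      * exists (x :: y :: l'). simpl in *. destruct W'. repeat split; auto. lia.
Qed.

Lemma dist_unique u v n m : dist adj u v n -> dist adj u v m -> n = m.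
Proof.
  intros [l1 [W1 [<- H1]]] [l2 [W2 [<- H2]]].
  specialize (H1 _ W2). specialize (H2 _ W1). lia.
Qed.

End Walks.

Section Tree.
Context {V : Type} (adj : V -> V -> Prop) (hT : is_tree adj).

Lemma adj_sym u v : adj u v -> adj v u.
Proof. exact (proj1 hT u v). Qed.

Lemma reduced_walk_unique u v l1 l2 :
  is_walk adj u l1 v -> reduced u l1 -> is_walk adj u l2 v -> reduced u l2 -> l1 = l2.
Proof.
  intros. destruct (proj2 (proj2 hT) u v) as [l [_ [_ Hl]]].
  rewrite (Hl l1), (Hl l2); auto.
Qed.

Lemma dist_reduced_walk u v l :
  is_walk adj u l v -> reduced u l -> dist adj u v (length l).
Proof.
  intros W R. exists l. repeat split; auto. intros l' W'.
  destruct (reduced_walk_le adj l' u v W') as [l2 [W2 [R2 L2]]].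
  now rewrite (reduced_walk_unique u v l l2).
Qed.

Section Path.
Context {I : Z -> Prop} {p : Z -> V} (hP : is_path adj I p).

Lemma proj_unique v q q' : proj adj I p v q -> proj adj I p v q' -> q = q'.
Proof.
  intros [Hq H1] [Hq' H2]. apply NNPP. intro E.
  destruct (H1 q' Hq' (not_eq_sym E)) as [n [m [D1 [D2 L]]]].
  destruct (H2 q Hq E) as [n' [m' [D3 [D4 L']]]].
  pose proof (dist_unique adj _ _ _ _ D1 D4). pose proof (dist_unique adj _ _ _ _ D2 D3). lia.
Qed.

(* The hypothesis on the penultimate vertex of [l] rules out backtracking
   where [l] meets the path. *)
Lemma reduced_walk_extend_along_path (s : Z) i u l : (s = 1 \/ s = -1) ->
  is_walk adj u l (p i) -> reduced u l -> forall n : nat,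
  ((1 <= n)%nat -> forall a, penultimate u l = Some a -> a <> p (i + s)) ->
  (forall k : nat, (k <= n)%nat -> I (i + s * Z.of_nat k)) ->
  exists sg, is_walk adj u (l ++ sg) (p (i + s * Z.of_nat n)) /\ reduced u (l ++ sg)
    /\ length sg = n /\ Forall (in_path I p) sg /\
    ((1 <= n)%nat -> penultimate u (l ++ sg) = Some (p (i + s * Z.of_nat (n - 1)))).
Proof.
  intros Hs W R n. destruct hP as [_ [_ [Pinj Padj]]].
  induction n as [|n IH]; intros Hpen HI.
  - exists nil. rewrite app_nil_r. replace (i + s * Z.of_nat 0) with i by lia.
    repeat split; auto. lia.
  - destruct IH as [sg [W1 [R1 [L1 [F1 P1]]]]].
    { intros _ a Ha. exact (Hpen ltac:(lia) a Ha). }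
    { intros k Hk. apply HI. lia. }
    assert (Hn := HI n ltac:(lia)). assert (HSn := HI (S n) ltac:(lia)).
    assert (Astep : adj (p (i + s * Z.of_nat n)) (p (i + s * Z.of_nat (S n)))).
    { destruct Hs as [-> | ->].
      - replace (i + 1 * Z.of_nat (S n)) with (i + 1 * Z.of_nat n + 1) in * by lia. auto.
      - apply adj_sym.
        replace (i + -1 * Z.of_nat n) with (i + -1 * Z.of_nat (S n) + 1) in * by lia. auto. }
    exists (sg ++ [p (i + s * Z.of_nat (S n))]). rewrite app_assoc. repeat split.
    + eapply is_walk_snoc; eauto.
    + apply reduced_snoc; auto. intros a Ha. destruct n as [|n'].
      * destruct sg; [|discriminate]. rewrite app_nil_r in Ha.
        replace (i + s * Z.of_nat 1) with (i + s) by lia. auto.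
      * rewrite P1 in Ha by lia. injection Ha as <-. intro E.
        apply Pinj in E; [lia | apply HI; lia | auto].
    + rewrite length_app. simpl. lia.
    + apply Forall_app. split; auto. constructor; auto. eexists; eauto.
    + intros _. replace (S n - 1)%nat with n by lia. eapply penultimate_snoc; eauto.
Qed.

Lemma reduced_walk_extend_to i j u l : I i -> I j ->
  is_walk adj u l (p i) -> reduced u l ->
  (forall a, penultimate u l = Some a -> ~ in_path I p a) ->
  exists sg, is_walk adj u (l ++ sg) (p j) /\ reduced u (l ++ sg)
    /\ length sg = Z.to_nat (Z.abs (j - i)) /\ Forall (in_path I p) sg.
Proof.
  intros Ii Ij W R Hpen. destruct hP as [_ [Hconv _]].
  set (s := if Z.leb i j then 1 else -1).
  assert (Hs : s = 1 \/ s = -1) by (unfold s; destruct (Z.leb i j); auto).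
  assert (HI : forall k : nat, (k <= Z.to_nat (Z.abs (j - i)))%nat -> I (i + s * Z.of_nat k)).
  { intros k Hk. unfold s in *. destruct (Z.leb_spec i j).
    - apply (Hconv i _ j); auto; lia.
    - apply (Hconv j _ i); auto; lia. }
  destruct (reduced_walk_extend_along_path s i u l Hs W R (Z.to_nat (Z.abs (j - i))))
    as [sg [W1 [R1 [L1 [F1 _]]]]].
  - intros H1 a Ha ->. apply (Hpen _ Ha). exists (i + s). split; auto.
    replace (i + s) with (i + s * Z.of_nat 1) by lia. apply HI. lia.
  - exact HI.
  - exists sg. replace (p j) with (p (i + s * Z.of_nat (Z.to_nat (Z.abs (j - i))))); auto.
    f_equal. unfold s; destruct (Z.leb_spec i j); lia.
Qed.

Definition foot_walk (v q : V) (l : list V) : Prop :=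
  is_walk adj v l q /\ reduced v l /\ avoids_but_last (in_path I p) v l /\ in_path I p q.

Lemma foot_walk_prefix l : forall v z,
  is_walk adj v l z -> in_path I p z -> reduced v l ->
  exists q l0 l1, foot_walk v q l0 /\ l = l0 ++ l1.
Proof.
  induction l as [|x l IH]; intros v z W Hz R.
  - simpl in W; subst. exists z, nil, nil. repeat split; simpl; auto.
  - destruct (classic (in_path I p v)) as [Hv|Hv].
    + exists v, nil, (x :: l). repeat split; simpl; auto.
    + destruct W as [Hvx W].
      destruct (IH x z W Hz (reduced_tail _ _ _ R)) as [q [l0 [l1 [[W0 [R0 [O0 Q0]]] ->]]]].
      exists q, (x :: l0), l1. repeat split; simpl; auto.
      destruct l0 as [|y l0']; [exact Logic.I|]. simpl in R. tauto.
Qed.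

Lemma foot_walk_exists v : exists q l, foot_walk v q l.
Proof.
  destruct hP as [[i Hi] _]. destruct (proj2 (proj2 hT) v (p i)) as [l [W [R _]]].
  assert (Hpi : in_path I p (p i)) by (exists i; auto).
  destruct (foot_walk_prefix l v (p i) W Hpi R) as [q [l0 [_ [F _]]]]. eauto.
Qed.

(* Continuing along the path from the foot [q] towards any other path vertex
   gives a reduced walk, i.e. a geodesic, which is strictly longer. *)
Lemma proj_of_foot_walk v q l : foot_walk v q l -> proj adj I p v q.
Proof.
  intros [W [R [O Q]]]. split; auto.
  intros q' [j [Ij <-]] Hne. destruct Q as [i [Ii <-]].
  destruct (reduced_walk_extend_to i j v l Ii Ij W R) as [sg [W1 [R1 [L1 _]]]].
  { intros a Ha. eapply avoids_but_last_penultimate; eauto. }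
  exists (length l), (length (l ++ sg)).
  split; [|split]; try apply dist_reduced_walk; auto.
  rewrite length_app, L1. assert (i <> j) by (intros ->; auto). lia.
Qed.

Lemma foot_walk_of_proj v q : proj adj I p v q -> exists l, foot_walk v q l.
Proof.
  intros H. destruct (foot_walk_exists v) as [q0 [l0 F]].
  rewrite <- (proj_unique v q0 q); eauto. eapply proj_of_foot_walk; eauto.
Qed.

Lemma proj_exists v : exists q, proj adj I p v q.
Proof.
  destruct (foot_walk_exists v) as [q [l F]]. exists q. eapply proj_of_foot_walk; eauto.
Qed.

Lemma proj_in_path v : in_path I p v -> proj adj I p v v.
Proof.
  intros H. apply (proj_of_foot_walk v v nil). repeat split; simpl; auto.
Qed.

Lemma reduced_walk_in_path u q l : in_path I p u -> in_path I p q ->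
  is_walk adj u l q -> reduced u l -> Forall (in_path I p) l.
Proof.
  intros [a [Ia <-]] [i [Ii <-]] W R.
  assert (W0 : is_walk adj (p a) nil (p a)) by reflexivity.
  destruct (reduced_walk_extend_to a i (p a) nil Ia Ii W0 Logic.I) as [sg [W1 [R1 [_ F1]]]].
  { discriminate. }
  now rewrite (reduced_walk_unique (p a) (p i) l sg).
Qed.

Lemma foot_walk_step v w q l : adj v w -> ~ in_path I p v ->
  foot_walk v q l -> exists l', foot_walk w q l'.
Proof.
  intros A Hv [W [R [O Q]]]. destruct l as [|x l1].
  - simpl in W; subst. contradiction.
  - destruct (classic (x = w)) as [<-|Hxw].
    + exists l1. destruct W as [_ W], O as [_ O].
      repeat split; auto. eapply reduced_tail; eauto.
    + assert (W' : is_walk adj w (v :: x :: l1) q) by (split; [apply adj_sym|]; auto).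
      assert (R' : reduced w (v :: x :: l1)) by (split; [congruence | exact R]).
      assert (Hw : ~ in_path I p w).
      { intros Hw. pose proof (reduced_walk_in_path w q _ Hw Q W' R') as F.
        inversion F; contradiction. }
      exists (v :: x :: l1). exact (conj W' (conj R' (conj (conj Hw O) Q))).
Qed.

Lemma proj_adj v w q : adj v w -> proj adj I p v q ->
  proj adj I p w q \/ (in_path I p v /\ in_path I p w).
Proof.
  intros A Hq. destruct (classic (in_path I p v)) as [Hv|Hv].
  - destruct (classic (in_path I p w)) as [Hw|Hw]; [now right|left].
    rewrite <- (proj_unique v v q (proj_in_path v Hv) Hq).
    destruct (foot_walk_exists w) as [q' [l F]].
    destruct (foot_walk_step w v q' l (adj_sym _ _ A) Hw F) as [l' F'].
    rewrite (proj_unique v q' v (proj_of_foot_walk _ _ _ F') (proj_in_path v Hv)) in F.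
    eapply proj_of_foot_walk; eauto.
  - left. destruct (foot_walk_of_proj v q Hq) as [l F].
    destruct (foot_walk_step v w q l A Hv F) as [l' F'].
    eapply proj_of_foot_walk; eauto.
Qed.

Lemma proj_aut g : is_aut adj g -> (forall q, in_path I p q -> g q = q) ->
  forall v q, proj adj I p v q -> proj adj I p (g v) q.
Proof.
  intros [Ginj [_ Gadj]] Gfix v q H. destruct (foot_walk_of_proj v q H) as [l [W [R [O Q]]]].
  apply (proj_of_foot_walk _ _ (map g l)). repeat split; auto.
  - rewrite <- (Gfix q Q). apply is_walk_map; auto. intros u w. apply Gadj.
  - now apply reduced_map.
  - apply avoids_but_last_map; auto.
    intros u [j [Ij Ej]]. exists j. split; auto. apply Ginj. rewrite Ej, Gfix; auto. exists j; auto.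
Qed.

Section Glue.
Context (gq : V -> V -> V) (pr : V -> V).
Hypothesis pr_proj : forall v, proj adj I p v (pr v).
Hypothesis gq_aut : forall q, in_path I p q -> is_aut adj (gq q).
Hypothesis gq_fix : forall q r, in_path I p q -> in_path I p r -> gq q r = r.

Definition glue (v : V) : V := gq (pr v) v.

Lemma pr_in_path v : in_path I p (pr v).
Proof. exact (proj1 (pr_proj v)). Qed.

Lemma pr_eq v q : proj adj I p v q -> pr v = q.
Proof. apply proj_unique, pr_proj. Qed.

Lemma pr_gq q v : in_path I p q -> pr (gq q v) = pr v.
Proof.
  intros Hq. apply pr_eq, (proj_aut (gq q)); auto using pr_proj.
Qed.

Lemma glue_proj v q : proj adj I p v q -> glue v = gq q v.
Proof. intros H. unfold glue. now rewrite (pr_eq v q H). Qed.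

Lemma glue_nbhd v w : adj v w -> glue w = gq (pr v) w.
Proof.
  intros A. destruct (proj_adj v w (pr v) A (pr_proj v)) as [Hw | [Hv Hw]].
  - now apply glue_proj.
  - unfold glue. rewrite !gq_fix; auto using pr_in_path.
Qed.

Lemma glue_inj u v : glue u = glue v -> u = v.
Proof.
  intros E. assert (Epr : pr u = pr v).
  { rewrite <- (pr_gq (pr u) u), <- (pr_gq (pr v) v) by apply pr_in_path.
    unfold glue in E. now rewrite E. }
  unfold glue in E. rewrite Epr in E.
  exact (proj1 (gq_aut _ (pr_in_path v)) u v E).
Qed.

Lemma glue_surj v : exists u, glue u = v.
Proof.
  destruct (proj1 (proj2 (gq_aut _ (pr_in_path v))) v) as [u Eu].
  exists u. unfold glue.
  rewrite <- (pr_gq (pr v) u (pr_in_path v)), Eu. exact Eu.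
Qed.

Lemma glue_aut : is_aut adj glue.
Proof.
  split; [exact glue_inj | split; [exact glue_surj |]].
  intros u v. destruct (gq_aut _ (pr_in_path u)) as [_ [Gsurj Gadj]].
  change (glue u) with (gq (pr u) u). split.
  - intros A. rewrite (glue_nbhd u v A). exact (proj1 (Gadj u v) A).
  - destruct (Gsurj (glue v)) as [v' Ev']. rewrite <- Ev'.
    intros A. apply Gadj in A. rewrite <- (glue_nbhd u v' A) in Ev'.
    now rewrite <- (glue_inj _ _ Ev').
Qed.

Lemma glue_fix q : in_path I p q -> glue q = q.
Proof. intros Hq. apply gq_fix; auto using pr_in_path. Qed.
End Glue.
End Path.

Definition locally_determined (G : (V -> V) -> Prop) : Prop :=
  forall g, is_aut adj g ->
  (forall v, exists h, G h /\ h v = g v /\ forall w, adj v w -> h w = g w) -> G g.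

Theorem propertyP_of_locally_determined (G : (V -> V) -> Prop) :
  (forall g, G g -> is_aut adj g) -> locally_determined G -> propertyP adj G.
Proof.
  intros G_aut G_local I p hP. split.
  - intros g g' _ _ Hgg' v. destruct (proj_exists hP v) as [q Hq].
    exact (Hgg' q v (proj1 Hq) Hq).
  - intros h Hh.
    destruct (choice (fun q g => in_path I p q ->
        fix_path G I p g /\ forall v, proj adj I p v q -> h q v = g v)) as [gq Hgq].
    { intros q. destruct (classic (in_path I p q)) as [Hq|Hq].
      - destruct (Hh q Hq) as [g Hg]. eauto.
      - exists (fun v => v). tauto. }
    destruct (choice (proj adj I p) (proj_exists hP)) as [pr Hpr].
    assert (gq_aut : forall q, in_path I p q -> is_aut adj (gq q)).
    { intros q Hq. exact (G_aut _ (proj1 (proj1 (Hgq q Hq)))). }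
    assert (gq_fix : forall q r, in_path I p q -> in_path I p r -> gq q r = r).
    { intros q r Hq. exact (proj2 (proj1 (Hgq q Hq)) r). }
    exists (glue gq pr). split; [split|].
    + apply G_local; [eapply glue_aut; eauto |].
      intros v. exists (gq (pr v)).
      split; [exact (proj1 (proj1 (Hgq _ (proj1 (Hpr v))))) | split; [reflexivity |]].
      intros w A. symmetry. eapply glue_nbhd; eauto.
    + eapply glue_fix; eauto.
    + intros q v Hq Hv. rewrite (glue_proj gq pr Hpr v q Hv).
      symmetry. exact (proj2 (Hgq q Hq) v Hv).
Qed.
End Tree.

Section Colouring.
Context {V X Y : Type} (adj : V -> V -> Prop) (VX : V -> Prop) (c : V -> V -> X + Y)
  (M : (X -> X) -> Prop) (N : (Y -> Y) -> Prop).

Lemma U_c_not_VX g v : U_c adj VX c M N g -> ~ VX v -> ~ VX (g v).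
Proof.
  intros [[Ginj _] [_ [GVX _]]] Hv Hgv.
  destruct (GVX _ Hgv) as [u [Hu Eu]]. apply Ginj in Eu. now subst.
Qed.

Lemma U_c_locally_determined : locally_determined adj (U_c adj VX c M N).
Proof.
  intros g Gaut Hloc.
  assert (VX_g : forall v, VX v <-> VX (g v)).
  { intros v. destruct (Hloc v) as [h [Hh [<- _]]]. split.
    - apply (proj1 (proj2 Hh)).
    - intros H. apply NNPP. intros Hv. exact (U_c_not_VX h v Hh Hv H). }
  split; [exact Gaut | split; [intros v; apply VX_g | split; [| split]]].
  - intros v Hv. destruct (proj1 (proj2 Gaut) v) as [u <-].
    exists u. split; [apply VX_g |]; auto.
  - intros v Hv. destruct (Hloc v) as [h [[_ [_ [_ [HM _]]]] [Ev Ew]]].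
    destruct (HM v Hv) as [m [Hm Pm]]. exists m. split; auto.
    intros w x A Cx. rewrite <- Ev, <- (Ew w A). auto.
  - intros v Hv. destruct (Hloc v) as [h [[_ [_ [_ [_ HN]]]] [Ev Ew]]].
    destruct (HN v Hv) as [n [Hn Pn]]. exists n. split; auto.
    intros w y A Cy. rewrite <- Ev, <- (Ew w A). auto.
Qed.

End Colouring.

Theorem theorem4p2
  (X Y : Type)
  (hX : exists x1 x2 : X, x1 <> x2) (hY : exists y1 y2 : Y, y1 <> y2)
  (M : (X -> X) -> Prop) (N : (Y -> Y) -> Prop)
  (hM : is_perm_group M) (hN : is_perm_group N)
  (V : Type) (adj : V -> V -> Prop) (VX : V -> Prop)
  (hT : is_tree adj) (hbip : is_bipartition adj VX)
  (hreg : @is_biregular V adj X Y VX)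
  (c : V -> V -> X + Y) (hc : legal_colouring adj VX c) :
  propertyP adj (U_c adj VX c M N).
Proof.
  apply propertyP_of_locally_determined; [exact hT | | apply U_c_locally_determined].
  intros g Hg. exact (proj1 Hg).
Qed.
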